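(* There is an absolute constant $C>0$ such that, for diffusive deposition and every configuration $\sigma\in\mathbb N^N$ with $|\sigma|<N/2$, $$P_g(\sigma)\ge\exp\Big(-\frac1N\Big(\sum_{j=1}^N\sigma_j(\sigma_j+1)\Big)\Big(1+C\frac{|\sigma|}{N}\Big)\Big).$$
   Context: Diffusive deposition: for $N\ge2$, $G_N=\{1,\dots,N\}$, a configuration $\sigma\in\mathbb N^N$ gives column heights, $|\sigma|=\sum_i\sigma_i$. Given $\sigma$, an explorer is a walk $(X_n,Z_n)_{n\ge0}$ with $(X_n)$ i.i.d. uniform on $G_N$, $Z_0=\max_i\sigma_i+1$, and $(Z_{n+1}-Z_n)$ i.i.d. uniform on $\{-1,1\}$ independent of $(X_n)$. With $n^*=\inf\{n:Z_n\le\sigma_{X_n}\}$, the hitting site is $(X_{n^*},Z_{n^*})$ and the explorer attaches to column $X_{n^*}$. The explorer hits the ground if $Z_{n^*}=0$; $P_g(\sigma)$ denotes the probability of this event. *)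

From Stdlib Require Import Reals ZArith Lra Lia.
Open Scope R_scope.

Fixpoint rsum (n : nat) (f : nat -> R) : R :=
  match n with O => 0 | S k => rsum k f + f k end.
Fixpoint nsum (n : nat) (f : nat -> nat) : nat :=
  match n with O => 0%nat | S k => (nsum k f + f k)%nat end.
Fixpoint nmax (n : nat) (f : nat -> nat) : nat :=
  match n with O => 0%nat | S k => Nat.max (nmax k f) (f k) end.

(* A configuration sigma in N^N is a function nat -> nat, of which only the
   values at the sites 0..N-1 matter (site i stands for site i+1 of G_N). *)

Definition size_conf (N : nat) (sigma : nat -> nat) : nat := nsum N sigma.

Definition max_height (N : nat) (sigma : nat -> nat) : nat := nmax N sigma.

(* pg_within N sigma T z : for an explorer whose height at the current time n
   is Z_n = z (and whose positions X_n, X_{n+1}, ... are i.i.d. uniform on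
   G_N, with i.i.d. uniform +-1 height increments), the probability that it
   stops (Z_m <= sigma_{X_m}) at some time m in {n, ..., n+T}, not earlier
   than m, and that Z_m = 0 (it hits the ground).  This is the law of the
   explorer written by conditioning on X_n and on the increment Z_{n+1}-Z_n. *)
Fixpoint pg_within (N : nat) (sigma : nat -> nat) (T : nat) (z : Z) : R :=
  match T with
  | O => / INR N * rsum N (fun x =>
           if Z.leb z (Z.of_nat (sigma x))
           then (if Z.eqb z 0 then 1 else 0) else 0)
  | S T' => / INR N * rsum N (fun x =>
           if Z.leb z (Z.of_nat (sigma x))
           then (if Z.eqb z 0 then 1 else 0)
           else / 2 * (pg_within N sigma T' (z + 1)%Z
                       + pg_within N sigma T' (z - 1)%Z))
  end.

(* P(n* <= T and Z_{n*} = 0) for the explorer started at Z_0 = max sigma + 1. *)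
Definition Pg_upto (N : nat) (sigma : nat -> nat) (T : nat) : R :=
  pg_within N sigma T (Z.of_nat (max_height N sigma) + 1)%Z.

(* P_g(sigma) is the limit as T -> infinity of Pg_upto (monotone, bounded);
   the theorem asserts existence of this limit together with the bound. *)

From Stdlib Require Import Reals ZArith Lra Lia.
Open Scope R_scope.

(* Let p_k be the probability that an explorer at height k eventually hits
   the ground.  Conditioning on one step gives p_0 = 1 and, for k >= 1,
   p_k = (1 - q_k) (p_(k+1) + p_(k-1)) / 2, where q_k is the fraction of
   columns of height at least k.  Then q_k <= m := |sigma| / N < 1/2, and
   q_k = 0 above the highest column, where the bounded sequence p is affine,
   hence constant.  Descending from there, the recursion propagates the bound
   0 <= p_(k-1) - p_k <= 2 (1 + 2m) s_k p_k with s_k the mean of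
   (sigma_x + 1 - k)^+, so p_(k-1) <= p_k exp (2 (1 + 2m) s_k).  Multiplying
   these for k = 1, 2, ... and using sum_k 2 s_k = N^-1 sum_x sigma_x (sigma_x + 1)
   gives the bound with C = 2. *)

Lemma rsum_ext n f g :
  (forall x, (x < n)%nat -> f x = g x) -> rsum n f = rsum n g.
Proof. induction n; simpl; intros; auto. rewrite IHn, H; auto. Qed.

Lemma rsum_le n f g :
  (forall x, (x < n)%nat -> f x <= g x) -> rsum n f <= rsum n g.
Proof.
  induction n; simpl; intros H; [lra|].
  pose proof (H n ltac:(lia)).
  pose proof (IHn ltac:(intros; apply H; lia)). lra.
Qed.

Lemma rsum_nonneg n f : (forall x, (x < n)%nat -> 0 <= f x) -> 0 <= rsum n f.
Proof.
  intros H. replace 0 with (rsum n (fun _ => 0)).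
  - apply rsum_le; auto.
  - induction n; simpl; [auto | rewrite IHn; [ring | intros; apply H; lia]].
Qed.

Lemma rsum_plus n f g : rsum n (fun x => f x + g x) = rsum n f + rsum n g.
Proof. induction n; simpl; lra. Qed.

Lemma rsum_scal n c f : rsum n (fun x => c * f x) = c * rsum n f.
Proof. induction n; simpl; [ring | rewrite IHn; ring]. Qed.

Lemma rsum_const n c : rsum n (fun _ => c) = INR n * c.
Proof. induction n; cbn [rsum]; [simpl; ring | rewrite IHn, S_INR; ring]. Qed.

Lemma rsum_ifb_0 n (b : nat -> bool) K :
  rsum n (fun x => if b x then 0 else K)
  = (INR n - rsum n (fun x => if b x then 1 else 0)) * K.
Proof.
  induction n; cbn [rsum]; [simpl; ring|].
  rewrite IHn, S_INR. destruct (b n); ring.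
Qed.

Lemma INR_nsum n f : INR (nsum n f) = rsum n (fun x => INR (f x)).
Proof. induction n; simpl; auto. rewrite plus_INR, IHn. auto. Qed.

Lemma nmax_ge n f x : (x < n)%nat -> (f x <= nmax n f)%nat.
Proof.
  induction n; simpl; intros Hx; [lia|].
  destruct (Nat.eq_dec x n); [subst; lia|].
  specialize (IHn ltac:(lia)). lia.
Qed.

Lemma mean_unit_interval n f :
  (forall x, (x < n)%nat -> 0 <= f x <= 1) -> 0 <= / INR n * rsum n f <= 1.
Proof.
  intros H. destruct n as [|n]; [simpl; lra|].
  assert (Hn : 0 < INR (S n)) by (apply lt_0_INR; lia).
  assert (0 <= rsum (S n) f) by (apply rsum_nonneg; intros; apply H; auto).
  assert (rsum (S n) f <= INR (S n) * 1)
    by (rewrite <- rsum_const; apply rsum_le; intros; apply H; auto).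
  split.
  - apply Rmult_le_pos; [apply Rlt_le, Rinv_0_lt_compat|]; auto.
  - apply (Rmult_le_reg_l (INR (S n))); auto.
    rewrite <- Rmult_assoc, Rinv_r; lra.
Qed.

Lemma Un_cv_const c : Un_cv (fun _ => c) c.
Proof. intros e He. exists 0%nat. intros. rewrite R_dist_eq. auto. Qed.

Lemma bounded_midpoint_seq_const (u : nat -> R) M :
  (forall j, 2 * u (S j) = u j + u (S (S j))) ->
  (forall j, Rabs (u j) <= M) -> u 1%nat = u 0%nat.
Proof.
  intros Hmid Hb. set (d := u 1%nat - u 0%nat).
  assert (Haff : forall j, u j = u 0%nat + INR j * d).
  { assert (Hpair : forall j, u j = u 0%nat + INR j * d
                              /\ u (S j) = u 0%nat + INR (S j) * d).
    { induction j as [|j [IH1 IH2]]; [simpl; unfold d; split; ring|].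
      split; [exact IH2|]. pose proof (Hmid j).
      rewrite !S_INR in *. lra. }
    apply Hpair. }
  destruct (Req_dec d 0) as [Hd|Hd]; [unfold d in Hd; lra|].
  exfalso. pose proof (Rabs_pos_lt d Hd).
  destruct (INR_unbounded (2 * M / Rabs d)) as [n Hn].
  assert (Hun : Rabs (INR n * d) <= 2 * M).
  { replace (INR n * d) with (u n - u 0%nat) by (rewrite (Haff n); ring).
    pose proof (Hb n). pose proof (Hb 0%nat).
    eapply Rle_trans; [apply Rabs_triang|]. rewrite Rabs_Ropp. lra. }
  rewrite Rabs_mult, Rabs_right in Hun by (apply Rle_ge, pos_INR).
  apply (Rmult_gt_compat_r (Rabs d)) in Hn; auto.
  unfold Rdiv in Hn. rewrite Rmult_assoc, Rinv_l in Hn by lra. lra.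
Qed.

Lemma le_mul_exp a b B : 0 <= b -> a - b <= b * B -> a <= b * exp B.
Proof. intros. pose proof (exp_ineq1_le B). nra. Qed.

(* Writing the recursion
   2 p1 = (1 - q) (p2 + p0) as (1 - q) ((p0 - p1) - (p1 - p2)) = 2 q p1, the
   new gap exceeds the old one by at most 2 q p1 / (1 - q) <= 2 (1 + 2m) q p1,
   using q <= m < 1/2. *)
Lemma gap_bound_step p0 p1 p2 q m B :
  0 <= q <= m -> m < / 2 -> 0 <= p1 -> 0 <= B ->
  2 * p1 = (1 - q) * (p2 + p0) -> 0 <= p1 - p2 <= p2 * B ->
  0 <= p0 - p1 <= p1 * (B + 2 * (1 + 2 * m) * q).
Proof.
  intros Hq Hm Hp1 HB Hrec [Hgap1 Hgap2].
  assert (E : (1 - q) * ((p0 - p1) - (p1 - p2)) = 2 * p1 * q) by nra.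
  assert (Hlo : 0 <= (p0 - p1) - (p1 - p2)).
  { apply (Rmult_le_reg_l (1 - q)); [lra|]. rewrite E. nra. }
  assert (Hhi : (p0 - p1) - (p1 - p2) <= 2 * p1 * (1 + 2 * m) * q).
  { apply (Rmult_le_reg_l (1 - q)); [lra|]. rewrite E.
    assert (0 <= (1 - q) * (1 + 2 * m) - 1) by nra.
    assert (0 <= p1 * q) by nra. nra. }
  assert (p2 * B <= p1 * B) by nra. nra.
Qed.

Lemma pronic_sub_succ a k :
  ((a + 1 - k) * (a + 2 - k)
   = (a + 1 - S k) * (a + 2 - S k) + 2 * (a + 1 - k))%nat.
Proof.
  destruct (Nat.le_gt_cases k a).
  - replace (a + 1 - k)%nat with (S (a - k)) by lia.
    replace (a + 2 - k)%nat with (S (S (a - k))) by lia.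
    replace (a + 1 - S k)%nat with (a - k)%nat by lia.
    replace (a + 2 - S k)%nat with (S (a - k)) by lia. ring.
  - replace (a + 1 - S k)%nat with 0%nat by lia.
    replace (a + 1 - k)%nat with 0%nat by lia. lia.
Qed.

Section Explorer.
Variable N : nat.
Variable sigma : nat -> nat.
Hypothesis HN : (0 < N)%nat.

Let pg := pg_within N sigma.

Lemma INR_N_pos : 0 < INR N.
Proof. apply lt_0_INR; lia. Qed.

Lemma pg_within_bounds T z : 0 <= pg T z <= 1.
Proof.
  revert z; induction T; intros z; unfold pg; simpl;
    apply mean_unit_interval; intros x _.
  - destruct (Z.leb z _), (Z.eqb z 0); lra.
  - destruct (Z.leb z _); [destruct (Z.eqb z 0); lra|].
    pose proof (IHT (z + 1)%Z); pose proof (IHT (z - 1)%Z). unfold pg in *. lra.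
Qed.

Lemma pg_within_mono T z : pg T z <= pg (S T) z.
Proof.
  pose proof (Rlt_le _ _ (Rinv_0_lt_compat _ INR_N_pos)).
  revert z; induction T; intros z; unfold pg; simpl;
    apply Rmult_le_compat_l; auto; apply rsum_le; intros x _;
    destruct (Z.leb z _); try lra.
  - pose proof (pg_within_bounds 0 (z + 1)); pose proof (pg_within_bounds 0 (z - 1)).
    unfold pg in *; simpl in *. lra.
  - pose proof (IHT (z + 1)%Z); pose proof (IHT (z - 1)%Z).
    unfold pg in *; simpl in *. lra.
Qed.

Lemma pg_within_ground T : pg T 0%Z = 1.
Proof.
  pose proof INR_N_pos.
  destruct T; unfold pg; simpl;
    (rewrite (rsum_ext _ _ (fun _ => 1)); [rewrite rsum_const; field; lra|]);
    intros x _; destruct (sigma x); reflexivity.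
Qed.

Definition ncols_ge k := rsum N (fun x => if Nat.leb k (sigma x) then 1 else 0).
Definition frac_ge k := ncols_ge k / INR N.

Lemma pg_within_step T k : (1 <= k)%nat ->
  pg (S T) (Z.of_nat k)
  = (1 - frac_ge k) * (/ 2 * (pg T (Z.of_nat (S k)) + pg T (Z.of_nat (k - 1)))).
Proof.
  intros Hk. unfold pg at 1; simpl pg_within.
  replace (Z.of_nat k + 1)%Z with (Z.of_nat (S k)) by lia.
  replace (Z.of_nat k - 1)%Z with (Z.of_nat (k - 1)) by lia.
  rewrite (rsum_ext _ _ (fun x => if Nat.leb k (sigma x) then 0 else
     / 2 * (pg T (Z.of_nat (S k)) + pg T (Z.of_nat (k - 1))))).
  - rewrite rsum_ifb_0. unfold frac_ge, ncols_ge, pg.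
    pose proof INR_N_pos. field. lra.
  - intros x _.
    destruct (Nat.leb_spec k (sigma x)), (Z.leb_spec (Z.of_nat k) (Z.of_nat (sigma x)));
      try lia; auto.
    destruct (Z.eqb_spec (Z.of_nat k) 0); [lia | auto].
Qed.

Lemma pg_within_cv z : {l | Un_cv (fun T => pg T z) l}.
Proof.
  apply growing_cv; [intro T; apply pg_within_mono|].
  exists 1. intros x [T ->]. apply pg_within_bounds.
Qed.

Definition pground k := proj1_sig (pg_within_cv (Z.of_nat k)).

Lemma pground_cv k : Un_cv (fun T => pg T (Z.of_nat k)) (pground k).
Proof. exact (proj2_sig (pg_within_cv (Z.of_nat k))). Qed.

Lemma pground_bounds k : 0 <= pground k <= 1.
Proof.
  split.
  - eapply Rle_cv_lim; [|apply Un_cv_const|apply pground_cv].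
    intros; apply pg_within_bounds.
  - eapply Rle_cv_lim; [|apply pground_cv|apply Un_cv_const].
    intros; apply pg_within_bounds.
Qed.

Lemma pground_0 : pground 0 = 1.
Proof.
  eapply UL_sequence; [apply pground_cv|].
  eapply Un_cv_ext; [|apply Un_cv_const].
  intros; symmetry; apply pg_within_ground.
Qed.

Lemma pground_rec k : (1 <= k)%nat ->
  2 * pground k = (1 - frac_ge k) * (pground (S k) + pground (k - 1)).
Proof.
  intros Hk.
  replace (pground k) with ((1 - frac_ge k) * (/ 2 * (pground (S k) + pground (k - 1)))).
  { field. }
  apply (UL_sequence (fun T => pg (S T) (Z.of_nat k))).
  - eapply Un_cv_ext; [intros; symmetry; apply pg_within_step; auto|].
    repeat apply CV_mult; try apply Un_cv_const.
    apply CV_plus; apply pground_cv.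
  - eapply Un_cv_ext; [|apply (CV_shift' (fun T => pg T (Z.of_nat k)) 1), pground_cv].
    intros T. simpl. rewrite Nat.add_1_r. reflexivity.
Qed.

Definition top := S (max_height N sigma).

Lemma frac_ge_above k : (top <= k)%nat -> frac_ge k = 0.
Proof.
  intros Hk. unfold frac_ge, ncols_ge.
  rewrite (rsum_ext _ _ (fun _ => 0)); [rewrite rsum_const; unfold Rdiv; ring|].
  intros x Hx. pose proof (nmax_ge N sigma x Hx). unfold top, max_height in Hk.
  destruct (Nat.leb_spec k (sigma x)); auto; lia.
Qed.

Lemma pground_top : pground top = pground (top - 1).
Proof.
  set (u j := pground (top - 1 + j)).
  replace top with (top - 1 + 1)%nat at 1 by (unfold top; lia).
  rewrite <- (Nat.add_0_r (top - 1)) at 2. change (u 1%nat = u 0%nat).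
  apply bounded_midpoint_seq_const with (M := 1).
  - intros j. unfold u.
    pose proof (pground_rec (top - 1 + S j) ltac:(unfold top; lia)) as Hrec.
    rewrite frac_ge_above in Hrec by (unfold top in *; lia).
    replace (top - 1 + S j - 1)%nat with (top - 1 + j)%nat in Hrec by (unfold top; lia).
    replace (S (top - 1 + S j)) with (top - 1 + S (S j))%nat in Hrec by lia. lra.
  - intros j. pose proof (pground_bounds (top - 1 + j)). apply Rabs_le. unfold u. lra.
Qed.

Hypothesis Hsize : INR (size_conf N sigma) < INR N / 2.

Definition mean_size := INR (size_conf N sigma) / INR N.

Lemma mean_size_bounds : 0 <= mean_size < / 2.
Proof.
  pose proof INR_N_pos. pose proof (pos_INR (size_conf N sigma)). unfold mean_size.
  split.
  - apply Rmult_le_pos; [|apply Rlt_le, Rinv_0_lt_compat]; auto.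
  - apply (Rmult_lt_reg_l (INR N)); auto. unfold Rdiv.
    rewrite <- Rmult_assoc, (Rmult_comm (INR N)), Rmult_assoc, Rinv_r by lra. lra.
Qed.

(* Every column of height at least k >= 1 contributes at least 1 to |sigma|. *)
Lemma frac_ge_bounds k : (1 <= k)%nat -> 0 <= frac_ge k <= mean_size.
Proof.
  intros Hk. pose proof INR_N_pos. pose proof (Rinv_0_lt_compat _ H).
  unfold frac_ge, mean_size, Rdiv.
  assert (0 <= ncols_ge k).
  { apply rsum_nonneg. intros x _. destruct (Nat.leb k (sigma x)); lra. }
  assert (ncols_ge k <= INR (size_conf N sigma)).
  { unfold ncols_ge, size_conf. rewrite INR_nsum. apply rsum_le. intros x _.
    destruct (Nat.leb_spec k (sigma x)); [apply (le_INR 1); lia | apply pos_INR]. }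
  split; nra.
Qed.

Definition excess k := / INR N * rsum N (fun x => INR (sigma x + 1 - k)).
Definition excess2 k :=
  / INR N * rsum N (fun x => INR ((sigma x + 1 - k) * (sigma x + 2 - k))).

Lemma excess_nonneg k : 0 <= excess k.
Proof.
  apply Rmult_le_pos; [apply Rlt_le, Rinv_0_lt_compat, INR_N_pos|].
  apply rsum_nonneg. intros; apply pos_INR.
Qed.

Lemma excess_succ k : excess k = excess (S k) + frac_ge k.
Proof.
  unfold excess, frac_ge, ncols_ge, Rdiv.
  rewrite (rsum_ext _ _ (fun x => INR (sigma x + 1 - S k)
                                  + (if Nat.leb k (sigma x) then 1 else 0))).
  - rewrite rsum_plus. ring.
  - intros x _. destruct (Nat.leb_spec k (sigma x)).
    + rewrite <- S_INR. f_equal. lia.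
    + rewrite Rplus_0_r. f_equal. lia.
Qed.

Lemma excess2_succ k : excess2 k = excess2 (S k) + 2 * excess k.
Proof.
  unfold excess2, excess.
  rewrite (rsum_ext _ _ (fun x => INR ((sigma x + 1 - S k) * (sigma x + 2 - S k))
                                  + 2 * INR (sigma x + 1 - k))).
  - rewrite rsum_plus, rsum_scal. ring.
  - intros x _. replace 2 with (INR 2) by reflexivity.
    rewrite <- mult_INR, <- plus_INR. f_equal. apply pronic_sub_succ.
Qed.

Lemma excess_above k : (top <= k)%nat -> excess k = 0 /\ excess2 k = 0.
Proof.
  intros Hk.
  assert (Hzero : forall x, (x < N)%nat -> (sigma x + 1 - k = 0)%nat).
  { intros x Hx. pose proof (nmax_ge N sigma x Hx).
    unfold top, max_height in Hk. lia. }
  unfold excess, excess2. split;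
    (rewrite (rsum_ext N _ (fun _ => 0)); [rewrite rsum_const; ring|]);
    intros x Hx; rewrite Hzero; auto.
Qed.

Lemma excess2_1 :
  excess2 1 = / INR N * INR (nsum N (fun j => sigma j * (sigma j + 1))%nat).
Proof.
  unfold excess2. rewrite INR_nsum. f_equal. apply rsum_ext. intros x _.
  f_equal. f_equal; lia.
Qed.

Let c := 1 + 2 * mean_size.

Lemma pground_gap k : (1 <= k <= top)%nat ->
  0 <= pground (k - 1) - pground k <= pground k * (2 * c * excess k).
Proof.
  intros Hk. replace k with (top - (top - k))%nat by lia.
  assert (Hd : (top - k < top)%nat) by lia. revert Hd.
  generalize (top - k)%nat as j. clear k Hk. induction j; intros Hj.
  - rewrite Nat.sub_0_r, <- pground_top, (proj1 (excess_above top (le_n _))). lra.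
  - set (k := (top - S j)%nat).
    assert (Hk : (1 <= k)%nat) by (unfold k; lia).
    specialize (IHj ltac:(lia)).
    replace (top - j)%nat with (S k) in IHj by (unfold k; lia).
    replace (S k - 1)%nat with k in IHj by lia.
    replace (2 * c * excess k)
      with (2 * c * excess (S k) + 2 * (1 + 2 * mean_size) * frac_ge k)
      by (rewrite (excess_succ k); unfold c; ring).
    pose proof mean_size_bounds. pose proof (excess_nonneg (S k)).
    apply (gap_bound_step _ _ (pground (S k))).
    + apply frac_ge_bounds, Hk.
    + lra.
    + apply pground_bounds.
    + unfold c. nra.
    + rewrite pground_rec by exact Hk. ring.
    + exact IHj.
Qed.

Lemma pground_chain k : (k <= top)%nat ->
  pground 0 <= pground k * exp (c * (excess2 1 - excess2 (S k))).
Proof.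
  induction k; intros Hk.
  - rewrite Rminus_diag, Rmult_0_r, exp_0. lra.
  - specialize (IHk ltac:(lia)).
    pose proof (pground_gap (S k) ltac:(lia)) as Hgap.
    replace (S k - 1)%nat with k in Hgap by lia.
    pose proof (le_mul_exp _ _ _ (proj1 (pground_bounds (S k))) (proj2 Hgap)).
    replace (c * (excess2 1 - excess2 (S (S k))))
      with (c * (excess2 1 - excess2 (S k)) + 2 * c * excess (S k))
      by (rewrite (excess2_succ (S k)); ring).
    rewrite exp_plus. pose proof (exp_pos (c * (excess2 1 - excess2 (S k)))). nra.
Qed.

Lemma pground_top_lower_bound : exp (- (c * excess2 1)) <= pground top.
Proof.
  pose proof (pground_chain top (le_n _)) as H.
  rewrite pground_0, (proj2 (excess_above (S top) ltac:(lia))), Rminus_0_r in H.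
  apply (Rmult_le_reg_r (exp (c * excess2 1))); [apply exp_pos|].
  rewrite <- exp_plus, Rplus_opp_l, exp_0. lra.
Qed.

End Explorer.

Theorem lemma2p1 :
  exists C : R, 0 < C /\
    forall (N : nat) (sigma : nat -> nat),
      (2 <= N)%nat ->
      INR (size_conf N sigma) < INR N / 2 ->
      exists Pg : R,
        Un_cv (Pg_upto N sigma) Pg /\
        exp (- (/ INR N) *
               INR (nsum N (fun j => sigma j * (sigma j + 1))%nat) *
               (1 + C * INR (size_conf N sigma) / INR N))
          <= Pg.
Proof.
  exists 2. split; [lra|]. intros N sigma HN Hsize.
  assert (HN0 : (0 < N)%nat) by lia.
  exists (pground N sigma HN0 (top N sigma)). split.
  - eapply Un_cv_ext; [|apply pground_cv].
    intros T. unfold Pg_upto, top. f_equal. lia.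
  - pose proof (pground_top_lower_bound N sigma HN0 Hsize) as H.
    rewrite excess2_1 in H by exact HN0. unfold mean_size in H.
    replace (- / INR N * INR (nsum N (fun j => (sigma j * (sigma j + 1))%nat))
             * (1 + 2 * INR (size_conf N sigma) / INR N))
      with (- ((1 + 2 * (INR (size_conf N sigma) / INR N))
               * (/ INR N * INR (nsum N (fun j => (sigma j * (sigma j + 1))%nat)))))
      by (unfold Rdiv; ring).
    exact H.
Qed.
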